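(* Fix $\delta>0$. Let (R) be the problem: maximize over $\{\mathbf Q_g\}\in\mathcal Q$ and $s\in[0,1]^{\mathcal K}$ the function $$F(\{\mathbf Q_g\},s)=\min_{g}\Big\{\frac{\sum_{k\in\mathcal K_g}s_k}{\tau_g|\mathcal K_g|}\min_{k\in\mathcal K_g}\big[r_k(\{\mathbf Q_\ell\})+\delta^{-1}(1-s_k)\big]\Big\},$$ which is equivalent to the epigraph problem: maximize $\alpha$ subject to $R_g\sum_{k\in\mathcal K_g}s_k\ge\tau_g|\mathcal K_g|\alpha^2$, $r_k(\{\mathbf Q_\ell\})+\delta^{-1}(1-s_k)\ge R_g$ for $k\in\mathcal K_g$, $0\le s_k\le1$, $\{\mathbf Q_g\}\in\mathcal Q$. Consider the iterative algorithm: start from any $\{\tilde{\mathbf Q}_\ell\}\in\mathcal Q$; at each iteration solve the convex problem maximize $\alpha$ over $\{\mathbf Q_g\},\{R_g\},\{s_k\},\alpha$ subject to $\begin{pmatrix}R_g&\alpha\sqrt{\tau_g|\mathcal K_g|}\\ \alpha\sqrt{\tau_g|\mathcal K_g|}&\sum_{k\in\mathcal K_g}s_k\end{pmatrix}\succeq\mathbf 0$ for all $g$, $\bar r_k(\{\mathbf Q_\ell\}\mid\{\tilde{\mathbf Q}_\ell\})+\delta^{-1}(1-s_k)\ge R_g$ for all $k\in\mathcal K_g$ and all $g$, $0\le s_k\le 1$, $\{\mathbf Q_g\}\in\mathcal Q$; then set $\tilde{\mathbf Q}_\ell$ equal to the obtained $\mathbf Q_\ell$ and repeat. Then every limit point of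 the sequence of iterates $(\{\mathbf Q_g\},\{s_k\})$ (together with the corresponding $\{R_g\},\alpha$) generated by this algorithm is a stationary point of (R).
   Context: Setting and notation as follows. $B$ BSs with $M$ antennas, powers $P_b\ge0$; users $\mathcal K$ partitioned into groups $\mathcal K_1,\dots,\mathcal K_G$; $\mathcal B_g$ the BSs serving group $g$; weights $\tau_g>0$; channels $\mathbf h_{b,k}\in\mathbb C^M$, $\mathbf h_k=[\mathbf h_{1,k}^H,\dots,\mathbf h_{B,k}^H]^H$; $\{\mathbf Q\}_{b,b'}$ the $(b,b')$-th $M\times M$ block. $\mathcal Q$: tuples of Hermitian PSD $MB\times MB$ matrices $(\mathbf Q_1,\dots,\mathbf Q_G)$ with $\sum_g\mathrm{tr}(\{\mathbf Q_g\}_{b,b})\le P_b$ for all $b$ and $\{\mathbf Q_g\}_{b,b'}=\mathbf 0$ if $b\notin\mathcal B_g$ or $b'\notin\mathcal B_g$. For $k\in\mathcal K_g$, $r_k(\{\mathbf Q_\ell\})=\log_2\big(1+\frac{\mathrm{tr}(\mathbf Q_g\mathbf h_k\mathbf h_k^H)}{\sum_{\ell\neq g}\mathrm{tr}(\mathbf Q_\ell\mathbf h_k\mathbf h_k^H)+1}\big)$ and $\bar r_k(\{\mathbf Q_\ell\}\mid\{\tilde{\mathbf Q}_\ell\})=\log_2\big(1+\sum_{\ell=1}^G\mathrm{tr}(\mathbf Q_\ell\mathbf h_k\mathbf h_k^H)\big)-\log_2\big(1+\sum_{\ell\ne g}\mathrm{tr}(\tilde{\mathbf Q}_\ell\mathbf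 h_k\mathbf h_k^H)\big)-\frac{\sum_{\ell\ne g}\mathrm{tr}((\mathbf Q_\ell-\tilde{\mathbf Q}_\ell)\mathbf h_k\mathbf h_k^H)}{[1+\sum_{\ell\ne g}\mathrm{tr}(\tilde{\mathbf Q}_\ell\mathbf h_k\mathbf h_k^H)]\ln 2}$. A stationary point of a maximization problem over a convex feasible set is a feasible point at which the directional derivative of the objective along every feasible direction is nonpositive. *)

From Stdlib Require Import Reals List Arith.
Open Scope R_scope.

Definition Cpx := (R * R)%type.
Definition C0 : Cpx := (0, 0).
Definition Cadd (a b : Cpx) : Cpx := (fst a + fst b, snd a + snd b).
Definition Cmul (a b : Cpx) : Cpx :=
  (fst a * fst b - snd a * snd b, fst a * snd b + snd a * fst b).
Definition Cconj (a : Cpx) : Cpx := (fst a, - snd a).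
Definition Cscal (t : R) (a : Cpx) : Cpx := (t * fst a, t * snd a).

Fixpoint sumR (n : nat) (f : nat -> R) : R :=
  match n with O => 0 | S m => sumR m f + f m end.
Fixpoint sumC (n : nat) (f : nat -> Cpx) : Cpx :=
  match n with O => C0 | S m => Cadd (sumC m f) (f m) end.

Definition Mat := nat -> nat -> Cpx.

Definition hermitian (N : nat) (A : Mat) : Prop :=
  forall i j, (i < N)%nat -> (j < N)%nat -> A i j = Cconj (A j i).

Definition quad (N : nat) (A : Mat) (v : nat -> Cpx) : Cpx :=
  sumC N (fun i => sumC N (fun j => Cmul (Cmul (Cconj (v i)) (A i j)) (v j))).

Definition hpsd (N : nat) (A : Mat) : Prop :=
  hermitian N A /\ forall v : nat -> Cpx, 0 <= fst (quad N A v).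

(* trace of the (b,b)-th M x M diagonal block; global index of antenna m of
   BS b is b*M+m, so the block {Q}_{b,b'} has rows b*M.. and cols b'*M.. *)
Definition blocktr (M : nat) (A : Mat) (b : nat) : R :=
  sumR M (fun m => fst (A (b * M + m)%nat (b * M + m)%nat)).

Definition MatTuple := nat -> Mat.

(* the feasible set \mathcal Q ; serv g b = true iff b \in B_g *)
Definition Qfeas (B M G : nat) (serv : nat -> nat -> bool) (P : nat -> R)
    (Q : MatTuple) : Prop :=
  (forall g, (g < G)%nat -> hpsd (M * B) (Q g)) /\
  (forall b, (b < B)%nat -> sumR G (fun g => blocktr M (Q g) b) <= P b) /\
  (forall g i j, (g < G)%nat -> (i < M * B)%nat -> (j < M * B)%nat ->
     (serv g (i / M)%nat = false \/ serv g (j / M)%nat = false) ->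
     Q g i j = C0).

(* tr(Q_l h_k h_k^H) = h_k^H Q_l h_k  (h k : stacked channel of user k) *)
Definition trQhh (B M : nat) (h : nat -> nat -> Cpx) (Q : MatTuple) (l k : nat) : R :=
  fst (quad (M * B) (Q l) (h k)).

Definition log2 (x : R) : R := ln x / ln 2.

Definition interf (B M G : nat) (grp : nat -> nat) (h : nat -> nat -> Cpx)
    (Q : MatTuple) (k : nat) : R :=
  sumR G (fun l => if Nat.eqb l (grp k) then 0 else trQhh B M h Q l k).

Definition rate (B M G : nat) (grp : nat -> nat) (h : nat -> nat -> Cpx)
    (Q : MatTuple) (k : nat) : R :=
  log2 (1 + trQhh B M h Q (grp k) k / (interf B M G grp h Q k + 1)).

Definition rbar (B M G : nat) (grp : nat -> nat) (h : nat -> nat -> Cpx)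
    (Q Qt : MatTuple) (k : nat) : R :=
  log2 (1 + sumR G (fun l => trQhh B M h Q l k))
  - log2 (1 + interf B M G grp h Qt k)
  - sumR G (fun l => if Nat.eqb l (grp k) then 0
                     else trQhh B M h Q l k - trQhh B M h Qt l k)
    / ((1 + interf B M G grp h Qt k) * ln 2).

Definition members (K : nat) (grp : nat -> nat) (g : nat) : list nat :=
  filter (fun k => Nat.eqb (grp k) g) (seq 0 K).

Definition lsum (f : nat -> R) (l : list nat) : R :=
  fold_right (fun k acc => f k + acc) 0 l.

(* minimum over a nonempty list (value 0 on the empty list, never used) *)
Fixpoint lmin (f : nat -> R) (l : list nat) : R :=
  match l with
  | nil => 0
  | x :: nil => f x
  | x :: t => Rmin (f x) (lmin f t)
  end.

Definition Fobj (B M K G : nat) (grp : nat -> nat) (h : nat -> nat -> Cpx)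
    (tau : nat -> R) (delta : R) (Q : MatTuple) (s : nat -> R) : R :=
  lmin (fun g =>
          (lsum s (members K grp g) / (tau g * INR (length (members K grp g))))
          * lmin (fun k => rate B M G grp h Q k + / delta * (1 - s k))
                 (members K grp g))
       (seq 0 G).

Definition Rfeas (B M K G : nat) (serv : nat -> nat -> bool) (P : nat -> R)
    (Q : MatTuple) (s : nat -> R) : Prop :=
  Qfeas B M G serv P Q /\ (forall k, (k < K)%nat -> 0 <= s k <= 1).

Definition psd2 (a b c : R) : Prop :=
  forall x y : R, 0 <= x * (a * x + b * y) + y * (b * x + c * y).

Definition subfeas (B M K G : nat) (grp : nat -> nat) (serv : nat -> nat -> bool)
    (P : nat -> R) (h : nat -> nat -> Cpx) (tau : nat -> R) (delta : R)
    (Qt Q : MatTuple) (Rg : nat -> R) (s : nat -> R) (al : R) : Prop :=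
  Qfeas B M G serv P Q /\
  (forall k, (k < K)%nat -> 0 <= s k <= 1) /\
  (forall g, (g < G)%nat ->
     psd2 (Rg g) (al * sqrt (tau g * INR (length (members K grp g))))
          (lsum s (members K grp g))) /\
  (forall g k, (g < G)%nat -> In k (members K grp g) ->
     rbar B M G grp h Q Qt k + / delta * (1 - s k) >= Rg g).

Definition subopt (B M K G : nat) (grp : nat -> nat) (serv : nat -> nat -> bool)
    (P : nat -> R) (h : nat -> nat -> Cpx) (tau : nat -> R) (delta : R)
    (Qt Q : MatTuple) (Rg : nat -> R) (s : nat -> R) (al : R) : Prop :=
  subfeas B M K G grp serv P h tau delta Qt Q Rg s al /\
  forall Q' Rg' s' al',
    subfeas B M K G grp serv P h tau delta Qt Q' Rg' s' al' -> al' <= al.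

Definition Qstep (Q D : MatTuple) (t : R) : MatTuple :=
  fun g i j => Cadd (Q g i j) (Cscal t (D g i j)).
Definition sstep (s ds : nat -> R) (t : R) : nat -> R := fun k => s k + t * ds k.

(* stationary point of (R): feasible, and along every feasible direction the
   (one-sided) directional derivative of F exists and is nonpositive *)
Definition stationaryR (B M K G : nat) (grp : nat -> nat) (serv : nat -> nat -> bool)
    (P : nat -> R) (h : nat -> nat -> Cpx) (tau : nat -> R) (delta : R)
    (Q : MatTuple) (s : nat -> R) : Prop :=
  Rfeas B M K G serv P Q s /\
  forall (D : MatTuple) (ds : nat -> R),
    (exists t0, 0 < t0 /\ forall t, 0 < t <= t0 ->
        Rfeas B M K G serv P (Qstep Q D t) (sstep s ds t)) ->
    exists L, L <= 0 /\
      forall eps, 0 < eps -> exists eta, 0 < eta /\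
        forall t, 0 < t < eta ->
          Rabs ((Fobj B M K G grp h tau delta (Qstep Q D t) (sstep s ds t)
                 - Fobj B M K G grp h tau delta Q s) / t - L) < eps.

From Stdlib Require Import Reals List Arith Lra Lia Psatz.
Open Scope R_scope.
Set Default Proof Using "Type".

(* The subproblem at [Qt] maximizes [al] subject to [al^2 <= Fbar (. | Qt)], where [Fbar] is
   the objective of (R) with every rate [r_k] replaced by its minorant [rbar_k (. | Qt)], which
   is tight at [Qt] (concavity of [ln]).  Its optimal [al^2] is therefore the maximum of
   [Fbar (. | Qt)], and [F (Q_n) = Fbar (Q_n | Q_n) <= al_(n+1)^2 <= F (Q_(n+1))]: the
   objective increases along the iterates.  Along the convergent subsequence [F] tends to
   [F (Qstar, sstar)], and passing to the limit in [Fbar (Q | Q_n) <= F (Q_(n+1))] shows that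
   [(Qstar, sstar)] maximizes [Fbar (. | Qstar)] on the feasible set.  Since [r_k] and
   [rbar_k (. | Qstar)] agree to first order at [Qstar], the two objectives, both minima of
   products of one-sided differentiable functions, have the same one-sided directional
   derivatives there, and at a maximizer of [Fbar (. | Qstar)] these are nonpositive. *)

Lemma sumR_ext n f g : (forall i, (i < n)%nat -> f i = g i) -> sumR n f = sumR n g.
Proof.
  induction n as [|n IH]; intros Hfg; simpl; [reflexivity|].
  rewrite IH by (intros; apply Hfg; lia). rewrite Hfg by lia. reflexivity.
Qed.

Lemma sumR_add_scal n f g t :
  sumR n (fun i => f i + t * g i) = sumR n f + t * sumR n g.
Proof. induction n as [|n IH]; simpl; [ring|rewrite IH; ring]. Qed.

Lemma sumR_minus n f g : sumR n (fun i => f i - g i) = sumR n f - sumR n g.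
Proof. induction n as [|n IH]; simpl; [ring|rewrite IH; ring]. Qed.

Lemma sumR_nonneg n f : (forall i, (i < n)%nat -> 0 <= f i) -> 0 <= sumR n f.
Proof.
  induction n as [|n IH]; intros Hf; simpl; [lra|].
  assert (0 <= f n) by (apply Hf; lia).
  assert (0 <= sumR n f) by (apply IH; intros; apply Hf; lia). lra.
Qed.

Lemma sumR_split_at n f j : (j < n)%nat ->
  sumR n f = f j + sumR n (fun i => if Nat.eqb i j then 0 else f i).
Proof.
  induction n as [|n IH]; intros Hj; simpl; [lia|].
  destruct (Nat.eqb n j) eqn:E.
  - apply Nat.eqb_eq in E; subst.
    rewrite (sumR_ext j (fun i => if Nat.eqb i j then 0 else f i) f); [ring|].
    intros i Hi; rewrite (proj2 (Nat.eqb_neq i j)) by lia; reflexivity.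
  - apply Nat.eqb_neq in E. rewrite IH by lia. ring.
Qed.

Lemma fst_sumC n f : fst (sumC n f) = sumR n (fun i => fst (f i)).
Proof. induction n as [|n IH]; simpl; [reflexivity|rewrite IH; reflexivity]. Qed.

Lemma Rdiv_nonneg x y : 0 <= x -> 0 < y -> 0 <= x / y.
Proof.
  intros Hx Hy; unfold Rdiv; apply Rmult_le_pos; [|left; apply Rinv_0_lt_compat]; assumption.
Qed.

Lemma lsum_nonneg s l : (forall x, In x l -> 0 <= s x) -> 0 <= lsum s l.
Proof.
  induction l as [|x l IH]; intros Hs; simpl; [lra|].
  assert (0 <= s x) by (apply Hs; left; reflexivity).
  assert (0 <= lsum s l) by (apply IH; intros; apply Hs; right; assumption). lra.
Qed.

Lemma lsum_sstep s ds t l : lsum (sstep s ds t) l = lsum s l + t * lsum ds l.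
Proof. induction l as [|x l IH]; simpl; [ring|rewrite IH; unfold sstep; ring]. Qed.

Lemma lmin_le f l x : In x l -> lmin f l <= f x.
Proof.
  induction l as [|y l IH]; [intros []|]; intros [<-|Hx]; simpl.
  - destruct l; [lra|apply Rmin_l].
  - destruct l; [destruct Hx|]. eapply Rle_trans; [apply Rmin_r|auto].
Qed.

Lemma lmin_glb f l c : l <> nil -> (forall x, In x l -> c <= f x) -> c <= lmin f l.
Proof.
  induction l as [|x l IH]; intros Hl Hc; [contradiction|simpl].
  destruct l; [apply Hc; left; reflexivity|].
  apply Rmin_glb; [apply Hc; left; reflexivity|].
  apply IH; [discriminate|intros; apply Hc; right; assumption].
Qed.

Lemma lmin_le_lmin f g l : (forall x, In x l -> f x <= g x) -> lmin f l <= lmin g l.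
Proof.
  induction l as [|x l IH]; intros Hfg; simpl; [lra|].
  destruct l; [apply Hfg; left; reflexivity|].
  apply Rmin_glb.
  - eapply Rle_trans; [apply Rmin_l|apply Hfg; left; reflexivity].
  - eapply Rle_trans; [apply Rmin_r|apply IH; intros; apply Hfg; right; assumption].
Qed.

Lemma lmin_ext f g l : (forall x, In x l -> f x = g x) -> lmin f l = lmin g l.
Proof.
  intros Hfg; apply Rle_antisym; apply lmin_le_lmin; intros x Hx; rewrite Hfg; auto; lra.
Qed.

Lemma Rabs_Rmin_sub x y u v :
  Rabs (Rmin x y - Rmin u v) <= Rmax (Rabs (x - u)) (Rabs (y - v)).
Proof. unfold Rmin, Rmax; repeat destruct Rle_dec; split_Rabs; lra. Qed.

(** * First-order behaviour at [0+] *)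

Definition near0 (P : R -> Prop) : Prop :=
  exists eta, 0 < eta /\ forall t, 0 < t < eta -> P t.

Lemma near0_lt c : 0 < c -> near0 (fun t => t < c).
Proof. intros Hc; exists c; split; [assumption|intros t Ht; lra]. Qed.

Lemma near0_forall (P : R -> Prop) : (forall t, P t) -> near0 P.
Proof. intros HP; exists 1; split; [lra|intros; apply HP]. Qed.

Lemma near0_and (P Q : R -> Prop) : near0 P -> near0 Q -> near0 (fun t => P t /\ Q t).
Proof.
  intros [e1 [He1 H1]] [e2 [He2 H2]].
  exists (Rmin e1 e2); split; [now apply Rmin_glb_lt|].
  intros t Ht; pose proof (Rmin_l e1 e2); pose proof (Rmin_r e1 e2).
  split; [apply H1|apply H2]; lra.
Qed.

Lemma near0_mono (P Q : R -> Prop) :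
  (forall t, 0 < t -> P t -> Q t) -> near0 P -> near0 Q.
Proof.
  intros HPQ [e [He H]]; exists e; split; [assumption|].
  intros t Ht; apply HPQ, H; lra.
Qed.

Lemma near0_witness (P : R -> Prop) : near0 P -> exists t, 0 < t /\ P t.
Proof. intros [e [He H]]; exists (e / 2); split; [lra|apply H; lra]. Qed.

(* [f t = f0 + a t + o(t)] as [t -> 0+].  [f0] is kept separate from [f 0] because along
   [Qstep Q D t] the point at [t = 0] is only extensionally equal to [Q]. *)
Definition right_deriv0 (f : R -> R) (f0 a : R) : Prop :=
  forall eps, 0 < eps -> near0 (fun t => Rabs (f t - f0 - a * t) <= eps * t).

Definition tangent0 (f g : R -> R) : Prop :=
  forall eps, 0 < eps -> near0 (fun t => Rabs (f t - g t) <= eps * t).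

Lemma right_deriv0_of_derivable f a : derivable_pt_lim f 0 a -> right_deriv0 f (f 0) a.
Proof.
  intros Hf eps Heps; destruct (Hf eps Heps) as [d Hd].
  exists d; split; [apply cond_pos|]; intros t Ht.
  specialize (Hd t ltac:(lra) ltac:(rewrite Rabs_right; lra)).
  rewrite Rplus_0_l in Hd.
  replace (f t - f 0 - a * t) with (t * ((f t - f 0) / t - a)) by (field; lra).
  rewrite Rabs_mult, (Rabs_right t) by lra. nra.
Qed.

Lemma right_deriv0_ext f g f0 a :
  near0 (fun t => f t = g t) -> right_deriv0 g f0 a -> right_deriv0 f f0 a.
Proof.
  intros Hfg Hg eps Heps.
  generalize (near0_and _ _ Hfg (Hg eps Heps)); apply near0_mono.
  intros t _ [-> H]; exact H.
Qed.

Lemma right_deriv0_affine c d : right_deriv0 (fun t => c + t * d) c d.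
Proof.
  intros eps Heps; exists 1; split; [lra|]; intros t Ht.
  replace (c + t * d - c - d * t) with 0 by ring. rewrite Rabs_R0; nra.
Qed.

Lemma right_deriv0_bound f f0 a : right_deriv0 f f0 a ->
  near0 (fun t => Rabs (f t - f0) <= (Rabs a + 1) * t).
Proof.
  intros Hf; generalize (Hf 1 Rlt_0_1); apply near0_mono.
  intros t Ht Hb. pose proof (Rabs_triang (f t - f0 - a * t) (a * t)) as Htri.
  rewrite Rabs_mult, (Rabs_right t) in Htri by lra.
  replace (f t - f0 - a * t + a * t) with (f t - f0) in Htri by ring. nra.
Qed.

Lemma right_deriv0_const c : right_deriv0 (fun _ => c) c 0.
Proof.
  intros eps Heps; exists 1; split; [lra|]; intros t Ht.
  replace (c - c - 0 * t) with 0 by ring. rewrite Rabs_R0; nra.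
Qed.

Lemma right_deriv0_plus f g f0 g0 a b :
  right_deriv0 f f0 a -> right_deriv0 g g0 b ->
  right_deriv0 (fun t => f t + g t) (f0 + g0) (a + b).
Proof.
  intros Hf Hg eps Heps.
  generalize (near0_and _ _ (Hf (eps / 2) ltac:(lra)) (Hg (eps / 2) ltac:(lra))).
  apply near0_mono; intros t Ht [H1 H2].
  replace (f t + g t - (f0 + g0) - (a + b) * t)
    with ((f t - f0 - a * t) + (g t - g0 - b * t)) by ring.
  eapply Rle_trans; [apply Rabs_triang|lra].
Qed.

Lemma right_deriv0_mul f g f0 g0 a b :
  right_deriv0 f f0 a -> right_deriv0 g g0 b ->
  right_deriv0 (fun t => f t * g t) (f0 * g0) (a * g0 + f0 * b).
Proof.
  intros Hf Hg eps Heps.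
  set (C := Rabs f0 + Rabs g0 + 1).
  set (Kf := Rabs a + 1); set (Kg := Rabs b + 1).
  assert (HC : 0 < C) by (unfold C; pose proof (Rabs_pos f0); pose proof (Rabs_pos g0); lra).
  assert (HKf : 0 < Kf) by (unfold Kf; pose proof (Rabs_pos a); lra).
  assert (HKg : 0 < Kg) by (unfold Kg; pose proof (Rabs_pos b); lra).
  set (eps1 := eps / (2 * C)).
  assert (Heps1 : 0 < eps1) by (unfold eps1; apply Rdiv_lt_0_compat; lra).
  assert (Hsmall : eps1 * (Rabs g0 + Rabs f0) <= eps / 2).
  { apply Rle_trans with (eps1 * C).
    - apply Rmult_le_compat_l; [lra|unfold C; lra].
    - unfold eps1; right; field; lra. }
  generalize (near0_and _ _ (near0_and _ _ (Hf eps1 Heps1) (Hg eps1 Heps1))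
               (near0_and _ _ (near0_and _ _ (right_deriv0_bound _ _ _ Hf)
                  (right_deriv0_bound _ _ _ Hg))
                  (near0_lt (eps / (2 * Kf * Kg)) ltac:(apply Rdiv_lt_0_compat; nra)))).
  apply near0_mono; intros t Ht [[H1 H2] [[H3 H4] H5]]; fold Kf Kg in H3, H4.
  replace (f t * g t - f0 * g0 - (a * g0 + f0 * b) * t) with
    ((f t - f0 - a * t) * g0 + f0 * (g t - g0 - b * t) + (f t - f0) * (g t - g0)) by ring.
  assert (HKt : Kf * Kg * t <= eps / 2).
  { apply (Rmult_lt_compat_l (2 * Kf * Kg)) in H5; [|nra].
    replace (2 * Kf * Kg * (eps / (2 * Kf * Kg))) with eps in H5 by (field; lra). lra. }
  eapply Rle_trans; [apply Rabs_triang|].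
  eapply Rle_trans; [apply Rplus_le_compat_r, Rabs_triang|].
  rewrite !Rabs_mult.
  pose proof (Rabs_pos f0); pose proof (Rabs_pos g0).
  pose proof (Rabs_pos (f t - f0)); pose proof (Rabs_pos (g t - g0)).
  assert (Rabs (f t - f0 - a * t) * Rabs g0 <= eps1 * t * Rabs g0) by nra.
  assert (Rabs f0 * Rabs (g t - g0 - b * t) <= Rabs f0 * (eps1 * t)) by nra.
  assert (Rabs (f t - f0) * Rabs (g t - g0) <= Kf * t * (Kg * t)) by nra.
  nra.
Qed.

Lemma right_deriv0_min_lt f g f0 g0 a b :
  right_deriv0 f f0 a -> right_deriv0 g g0 b -> f0 < g0 ->
  right_deriv0 (fun t => Rmin (f t) (g t)) f0 a.
Proof.
  intros Hf Hg Hlt. apply right_deriv0_ext with f; [|exact Hf].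
  set (K := Rabs a + 1 + (Rabs b + 1)).
  assert (HK : 0 < K) by (unfold K; pose proof (Rabs_pos a); pose proof (Rabs_pos b); lra).
  generalize (near0_and _ _ (near0_and _ _ (right_deriv0_bound _ _ _ Hf)
                                          (right_deriv0_bound _ _ _ Hg))
                 (near0_lt ((g0 - f0) / K) ltac:(apply Rdiv_lt_0_compat; lra))).
  apply near0_mono; intros t Ht [[Hft Hgt] Hsmall].
  apply Rmin_left.
  apply (Rmult_lt_compat_r K) in Hsmall; [|lra].
  replace ((g0 - f0) / K * K) with (g0 - f0) in Hsmall by (field; lra).
  unfold K in Hsmall. split_Rabs; nra.
Qed.

Lemma Rmin_affine c a b t : 0 <= t -> Rmin (c + a * t) (c + b * t) = c + Rmin a b * t.
Proof. intros Ht; unfold Rmin; repeat destruct Rle_dec; nra. Qed.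

Lemma right_deriv0_min f g f0 g0 a b :
  right_deriv0 f f0 a -> right_deriv0 g g0 b ->
  exists c, right_deriv0 (fun t => Rmin (f t) (g t)) (Rmin f0 g0) c.
Proof.
  intros Hf Hg. destruct (Rtotal_order f0 g0) as [Hlt|[<-|Hgt]].
  - exists a. rewrite Rmin_left by lra. exact (right_deriv0_min_lt _ _ _ _ _ _ Hf Hg Hlt).
  - exists (Rmin a b). intros eps Heps.
    generalize (near0_and _ _ (Hf eps Heps) (Hg eps Heps)); apply near0_mono.
    intros t Ht [H1 H2]. rewrite (Rmin_left f0 f0) by lra.
    replace (Rmin (f t) (g t) - f0 - Rmin a b * t)
      with (Rmin (f t) (g t) - Rmin (f0 + a * t) (f0 + b * t))
      by (rewrite Rmin_affine by lra; ring).
    eapply Rle_trans; [apply Rabs_Rmin_sub|].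
    apply Rmax_lub; [replace (f t - (f0 + a * t)) with (f t - f0 - a * t) by ring
                    |replace (g t - (f0 + b * t)) with (g t - f0 - b * t) by ring]; assumption.
  - exists b. rewrite Rmin_right by lra.
    apply right_deriv0_ext with (fun t => Rmin (g t) (f t)).
    + exists 1; split; [lra|intros; apply Rmin_comm].
    + exact (right_deriv0_min_lt _ _ _ _ _ _ Hg Hf Hgt).
Qed.

Lemma right_deriv0_lmin (F : R -> nat -> R) (F0 : nat -> R) l :
  (forall x, In x l -> exists a, right_deriv0 (fun t => F t x) (F0 x) a) ->
  exists c, right_deriv0 (fun t => lmin (F t) l) (lmin F0 l) c.
Proof.
  induction l as [|x l IH]; intros HF; simpl.
  - exists 0; apply right_deriv0_const.
  - destruct l as [|y l]; [apply HF; left; reflexivity|].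
    destruct (HF x (or_introl eq_refl)) as [a Ha].
    destruct IH as [b Hb]; [intros; apply HF; right; assumption|].
    exact (right_deriv0_min _ _ _ _ _ _ Ha Hb).
Qed.

Lemma right_deriv0_tangent f g f0 a :
  right_deriv0 g f0 a -> tangent0 f g -> right_deriv0 f f0 a.
Proof.
  intros Hg Hfg eps Heps.
  generalize (near0_and _ _ (Hg (eps / 2) ltac:(lra)) (Hfg (eps / 2) ltac:(lra))).
  apply near0_mono; intros t Ht [H1 H2].
  replace (f t - f0 - a * t) with ((f t - g t) + (g t - f0 - a * t)) by ring.
  eapply Rle_trans; [apply Rabs_triang|lra].
Qed.

Lemma right_deriv0_nonpos f f0 a :
  right_deriv0 f f0 a -> near0 (fun t => f t <= f0) -> a <= 0.
Proof.
  intros Hf Hmax. destruct (Rle_lt_dec a 0) as [|Ha]; [assumption|exfalso].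
  destruct (near0_witness _ (near0_and _ _ (Hf (a / 2) ltac:(lra)) Hmax))
    as [t [Ht [H1 H2]]].
  revert H1; split_Rabs; nra.
Qed.

Lemma right_deriv0_quotient f f0 a : right_deriv0 f f0 a ->
  forall eps, 0 < eps -> near0 (fun t => Rabs ((f t - f0) / t - a) < eps).
Proof.
  intros Hf eps Heps. generalize (Hf (eps / 2) ltac:(lra)); apply near0_mono.
  intros t Ht H.
  replace ((f t - f0) / t - a) with ((f t - f0 - a * t) / t) by (field; lra).
  unfold Rdiv; rewrite Rabs_mult, (Rabs_right (/ t)) by (left; apply Rinv_0_lt_compat; lra).
  apply (Rmult_le_compat_r (/ t)) in H; [|left; apply Rinv_0_lt_compat; lra].
  replace (eps / 2 * t * / t) with (eps / 2) in H by (field; lra). lra.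
Qed.

Lemma tangent0_of_right_deriv0 f g f0 a :
  right_deriv0 f f0 a -> right_deriv0 g f0 a -> tangent0 f g.
Proof.
  intros Hf Hg eps Heps.
  generalize (near0_and _ _ (Hf (eps / 2) ltac:(lra)) (Hg (eps / 2) ltac:(lra))).
  apply near0_mono; intros t Ht [H1 H2].
  replace (f t - g t) with ((f t - f0 - a * t) - (g t - f0 - a * t)) by ring.
  eapply Rle_trans; [apply Rabs_triang|]. rewrite Rabs_Ropp. lra.
Qed.

Lemma tangent0_of_diff X Y f g :
  tangent0 X Y -> near0 (fun t => f t - g t = X t - Y t) -> tangent0 f g.
Proof.
  intros HXY Hfg eps Heps.
  generalize (near0_and _ _ Hfg (HXY eps Heps)); apply near0_mono.
  intros t _ [-> H]; exact H.
Qed.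

Lemma tangent0_mul_l u u0 a X Y :
  right_deriv0 u u0 a -> tangent0 X Y -> tangent0 (fun t => u t * X t) (fun t => u t * Y t).
Proof.
  intros Hu HXY eps Heps.
  set (C := Rabs u0 + (Rabs a + 1)).
  assert (HC : 0 < C) by (unfold C; pose proof (Rabs_pos u0); pose proof (Rabs_pos a); lra).
  generalize (near0_and _ _ (near0_and _ _ (right_deriv0_bound _ _ _ Hu) (near0_lt 1 Rlt_0_1))
                 (HXY (eps / C) ltac:(apply Rdiv_lt_0_compat; lra))).
  apply near0_mono; intros t Ht [[Hb Ht1] H].
  replace (u t * X t - u t * Y t) with (u t * (X t - Y t)) by ring.
  rewrite Rabs_mult.
  assert (Hut : Rabs (u t) <= C).
  { replace (u t) with (u0 + (u t - u0)) by ring.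
    eapply Rle_trans; [apply Rabs_triang|]. unfold C.
    pose proof (Rabs_pos a). nra. }
  apply Rle_trans with (C * (eps / C * t)).
  - apply Rmult_le_compat; [apply Rabs_pos|apply Rabs_pos|assumption|assumption].
  - right; field; lra.
Qed.

Lemma tangent0_min f1 g1 f2 g2 : tangent0 f1 g1 -> tangent0 f2 g2 ->
  tangent0 (fun t => Rmin (f1 t) (f2 t)) (fun t => Rmin (g1 t) (g2 t)).
Proof.
  intros H1 H2 eps Heps.
  generalize (near0_and _ _ (H1 eps Heps) (H2 eps Heps)); apply near0_mono.
  intros t _ [A1 A2]. eapply Rle_trans; [apply Rabs_Rmin_sub|apply Rmax_lub; assumption].
Qed.

Lemma tangent0_lmin (F Gf : R -> nat -> R) l :
  (forall x, In x l -> tangent0 (fun t => F t x) (fun t => Gf t x)) ->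
  tangent0 (fun t => lmin (F t) l) (fun t => lmin (Gf t) l).
Proof.
  induction l as [|x l IH]; intros HFG; simpl.
  - intros eps Heps; exists 1; split; [lra|]; intros t Ht.
    rewrite Rminus_diag, Rabs_R0; nra.
  - destruct l as [|y l]; [apply HFG; left; reflexivity|].
    apply (tangent0_min (fun t => F t x) (fun t => Gf t x)).
    + apply HFG; left; reflexivity.
    + apply IH; intros; apply HFG; right; assumption.
Qed.

Lemma cv_const c : Un_cv (fun _ => c) c.
Proof.
  intros e He; exists O; intros n _. unfold Rdist. rewrite Rminus_diag, Rabs_R0; assumption.
Qed.

Lemma cv_ext u v l : (forall n, u n = v n) -> Un_cv u l -> Un_cv v l.
Proof.
  intros Huv Hu e He; destruct (Hu e He) as [N HN].
  exists N; intros n Hn; rewrite <- Huv; apply HN; assumption.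
Qed.

Lemma cv_le_const u l c : Un_cv u l -> (forall n, u n <= c) -> l <= c.
Proof. intros Hu Hc; exact (Rle_cv_lim Hc Hu (cv_const c)). Qed.

Lemma cv_ge_const u l c : Un_cv u l -> (forall n, c <= u n) -> c <= l.
Proof. intros Hu Hc; exact (Rle_cv_lim Hc (cv_const c) Hu). Qed.

Lemma cv_eq_const u l c : Un_cv u l -> (forall n, u n = c) -> l = c.
Proof.
  intros Hu Hc; apply Rle_antisym;
    [apply (cv_le_const u)|apply (cv_ge_const u)]; auto; intros n; rewrite Hc; lra.
Qed.

Lemma le_strict_mono (phi : nat -> nat) :
  (forall n, (phi n < phi (S n))%nat) -> forall n, (n <= phi n)%nat.
Proof. intros Hphi n; induction n as [|n IH]; [lia|specialize (Hphi n); lia]. Qed.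

Lemma cv_subseq_le u phi l c m : (forall n, (phi n < phi (S n))%nat) ->
  Un_cv (fun n => u (phi n)) l -> (forall n, (m <= n)%nat -> u n <= c) -> l <= c.
Proof.
  intros Hphi Hu Hc; apply (cv_le_const _ _ _ (CV_shift' _ m _ Hu)).
  intros n; apply Hc. pose proof (le_strict_mono phi Hphi (n + m)); lia.
Qed.

Lemma cv_subseq_ge u phi l c m : (forall n, (phi n < phi (S n))%nat) ->
  Un_cv (fun n => u (phi n)) l -> (forall n, (m <= n)%nat -> c <= u n) -> c <= l.
Proof.
  intros Hphi Hu Hc; apply (cv_ge_const _ _ _ (CV_shift' _ m _ Hu)).
  intros n; apply Hc. pose proof (le_strict_mono phi Hphi (n + m)); lia.
Qed.

Lemma cv_sumR n (u : nat -> nat -> R) l :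
  (forall i, (i < n)%nat -> Un_cv (fun m => u m i) (l i)) ->
  Un_cv (fun m => sumR n (u m)) (sumR n l).
Proof.
  induction n as [|n IH]; intros Hu; simpl; [apply cv_const|].
  apply CV_plus; [apply IH; intros; apply Hu; lia|apply Hu; lia].
Qed.

Lemma cv_lsum (u : nat -> nat -> R) f l :
  (forall x, In x l -> Un_cv (fun m => u m x) (f x)) ->
  Un_cv (fun m => lsum (u m) l) (lsum f l).
Proof.
  induction l as [|x l IH]; intros Hu; simpl; [apply cv_const|].
  apply CV_plus; [apply Hu; left; reflexivity|apply IH; intros; apply Hu; right; assumption].
Qed.

Lemma cv_min u v l l' : Un_cv u l -> Un_cv v l' ->
  Un_cv (fun n => Rmin (u n) (v n)) (Rmin l l').
Proof.
  intros Hu Hv e He; destruct (Hu e He) as [N1 H1]; destruct (Hv e He) as [N2 H2].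
  exists (Nat.max N1 N2); intros n Hn; unfold Rdist.
  eapply Rle_lt_trans; [apply Rabs_Rmin_sub|].
  apply Rmax_lub_lt; [apply H1|apply H2]; lia.
Qed.

Lemma cv_lmin (u : nat -> nat -> R) f l :
  (forall x, In x l -> Un_cv (fun m => u m x) (f x)) ->
  Un_cv (fun m => lmin (u m) l) (lmin f l).
Proof.
  induction l as [|x l IH]; intros Hu; simpl; [apply cv_const|].
  destruct l as [|y l]; [apply Hu; left; reflexivity|].
  apply cv_min; [apply Hu; left; reflexivity|apply IH; intros; apply Hu; right; assumption].
Qed.

Lemma cv_log2 u l : Un_cv u l -> 0 < l -> Un_cv (fun n => log2 (u n)) (log2 l).
Proof.
  intros Hu Hl; unfold log2, Rdiv. apply CV_mult; [|apply cv_const].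
  apply continuity_seq; [|assumption].
  apply derivable_continuous_pt; exists (/ l); apply derivable_pt_lim_ln; assumption.
Qed.

Lemma cv_div u v l l' : Un_cv u l -> Un_cv v l' -> l' <> 0 ->
  Un_cv (fun n => u n / v n) (l / l').
Proof.
  intros Hu Hv Hl'; unfold Rdiv; apply CV_mult; [assumption|].
  change (Un_cv (fun n => inv_fct id (v n)) (inv_fct id l')).
  apply continuity_seq; [|assumption].
  apply continuity_pt_inv; [apply derivable_continuous_pt, derivable_pt_id|assumption].
Qed.

Lemma fst_quad N A v : fst (quad N A v) =
  sumR N (fun i => sumR N (fun j =>
    fst (A i j) * (fst (v i) * fst (v j) + snd (v i) * snd (v j))
    + snd (A i j) * (snd (v i) * fst (v j) - fst (v i) * snd (v j)))).
Proof.
  unfold quad; rewrite fst_sumC; apply sumR_ext; intros i _.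
  rewrite fst_sumC; apply sumR_ext; intros j _. simpl; ring.
Qed.

Lemma fst_quad_add_scal N A D t v :
  fst (quad N (fun i j => Cadd (A i j) (Cscal t (D i j))) v)
  = fst (quad N A v) + t * fst (quad N D v).
Proof.
  rewrite !fst_quad, <- sumR_add_scal; apply sumR_ext; intros i _.
  rewrite <- sumR_add_scal; apply sumR_ext; intros j _. simpl; ring.
Qed.

Lemma cv_fst_quad N (A : nat -> Mat) Alim v :
  (forall i j, (i < N)%nat -> (j < N)%nat ->
     Un_cv (fun n => fst (A n i j)) (fst (Alim i j)) /\
     Un_cv (fun n => snd (A n i j)) (snd (Alim i j))) ->
  Un_cv (fun n => fst (quad N (A n) v)) (fst (quad N Alim v)).
Proof.
  intros HA. rewrite fst_quad. apply cv_ext with (2 := cv_sumR _ _ _ (fun i Hi =>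
    cv_sumR _ _ _ (fun j Hj => CV_plus _ _ _ _
      (CV_mult _ _ _ _ (proj1 (HA i j Hi Hj)) (cv_const _))
      (CV_mult _ _ _ _ (proj2 (HA i j Hi Hj)) (cv_const _))))).
  intros n; rewrite fst_quad; reflexivity.
Qed.

Lemma ln_div_pos x y : 0 < x -> 0 < y -> ln (x / y) = ln x - ln y.
Proof.
  intros Hx Hy; unfold Rdiv.
  rewrite ln_mult, ln_Rinv by (try apply Rinv_0_lt_compat; assumption). ring.
Qed.

Lemma ln_sub_le x y : 0 < x -> 0 < y -> ln x - ln y <= (x - y) / y.
Proof.
  intros Hx Hy. rewrite <- ln_div_pos by assumption.
  assert (Hq : 0 < x / y) by (apply Rdiv_lt_0_compat; assumption).
  pose proof (exp_ineq1_le (ln (x / y))) as Hexp; rewrite exp_ln in Hexp by assumption.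
  replace ((x - y) / y) with (x / y - 1) by (field; lra). lra.
Qed.

Lemma ln2_pos : 0 < ln 2.
Proof. pose proof ln_lt_2; lra. Qed.

Lemma right_deriv0_log2_affine p q : 0 < p ->
  right_deriv0 (fun t => log2 (p + t * q)) (log2 p) (q / p / ln 2).
Proof.
  intros Hp. pose proof ln2_pos.
  replace (log2 p) with ((fun t => log2 (p + t * q)) 0) by (f_equal; ring).
  apply right_deriv0_of_derivable.
  replace (q / p / ln 2) with (/ ln 2 * (/ (p + 0 * q) * (0 + q * 1))) by (field; lra).
  apply (derivable_pt_lim_ext (mult_real_fct (/ ln 2) (comp ln (fun t => p + t * q)))).
  { intros t; unfold mult_real_fct, comp, log2, Rdiv; ring. }
  apply derivable_pt_lim_scal.
  apply (derivable_pt_lim_comp (fun t => p + t * q) ln).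
  - apply derivable_pt_lim_plus; [apply derivable_pt_lim_const|].
    apply (derivable_pt_lim_ext (mult_real_fct q id)); [intros; unfold mult_real_fct, id; ring|].
    apply derivable_pt_lim_scal, derivable_pt_lim_id.
  - apply derivable_pt_lim_ln; lra.
Qed.

Lemma psd2_det a b c : psd2 a b c -> 0 <= a /\ 0 <= c /\ b * b <= a * c.
Proof.
  intros H. pose proof (H 1 0); pose proof (H 0 1); pose proof (H b (- a)).
  split; [nra|split; [nra|]].
  destruct (Rle_lt_dec a 0) as [Ha|Ha]; [|nra].
  assert (a = 0) as -> by nra.
  destruct (Req_dec b 0) as [->|Hb]; [nra|].
  pose proof (H (- (c + 1) / b) 1) as Hq.
  replace (- (c + 1) / b * (0 * (- (c + 1) / b) + b * 1) + 1 * (b * (- (c + 1) / b) + c * 1))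
    with (- c - 2) in Hq by (field; assumption). nra.
Qed.

Lemma psd2_of_det a b c : 0 < a -> b * b <= a * c -> psd2 a b c.
Proof.
  intros Ha Hdet x y.
  assert (0 <= a * (x * (a * x + b * y) + y * (b * x + c * y))).
  { replace (a * (x * (a * x + b * y) + y * (b * x + c * y)))
      with ((a * x + b * y) * (a * x + b * y) + (a * c - b * b) * (y * y)) by ring.
    pose proof (Rle_0_sqr (a * x + b * y)); pose proof (Rle_0_sqr y); unfold Rsqr in *. nra. }
  nra.
Qed.

(* The LMI of the subproblem for one group: with [c = tau_g |K_g|] and [S = sum s_k],
   [al^2 <= (S / c) R] is its Schur complement. *)
Lemma psd2_sq_le R0 al S c : 0 < c -> 0 <= S ->
  psd2 R0 (al * sqrt c) S -> al * al <= S / c * R0.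
Proof.
  intros Hc HS Hpsd. destruct (psd2_det _ _ _ Hpsd) as (HR & _ & Hdet).
  replace (al * sqrt c * (al * sqrt c)) with (al * al * (sqrt c * sqrt c)) in Hdet by ring.
  rewrite sqrt_sqrt in Hdet by lra.
  apply (Rmult_le_reg_r c); [assumption|].
  replace (S / c * R0 * c) with (R0 * S) by (field; lra). lra.
Qed.

Lemma psd2_of_sq_le R0 F S c : 0 < c -> 0 <= S -> 0 < F ->
  F <= S / c * R0 -> psd2 R0 (sqrt F * sqrt c) S.
Proof.
  intros Hc HS HF Hle.
  assert (HR : 0 < R0).
  { destruct (Rle_lt_dec R0 0); [|assumption].
    assert (0 <= S / c) by (apply Rdiv_nonneg; assumption).
    nra. }
  apply psd2_of_det; [assumption|].
  replace (sqrt F * sqrt c * (sqrt F * sqrt c)) with (sqrt F * sqrt F * (sqrt c * sqrt c)) by ring.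
  rewrite !sqrt_sqrt by lra.
  apply (Rmult_le_compat_r c) in Hle; [|lra].
  replace (S / c * R0 * c) with (R0 * S) in Hle by (field; lra). lra.
Qed.

(** * The max-min problem (R) and its surrogate *)

Section Problem.

Variables (B M K G : nat) (grp : nat -> nat) (serv : nat -> nat -> bool)
  (P : nat -> R) (h : nat -> nat -> Cpx) (tau : nat -> R) (delta : R).

Hypothesis Htau : forall g, (g < G)%nat -> 0 < tau g.
Hypothesis Hgrp : forall k, (k < K)%nat -> (grp k < G)%nat.
Hypothesis Hnonempty : forall g, (g < G)%nat -> exists k, (k < K)%nat /\ grp k = g.

Local Notation tr := (trQhh B M h).
Local Notation intf := (interf B M G grp h).
Local Notation total Q k := (sumR G (fun l => tr Q l k)).
Local Notation Qfeas := (Qfeas B M G serv P).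
Local Notation Rfeas := (Rfeas B M K G serv P).

Lemma trQhh_Qstep Q D t l k : tr (Qstep Q D t) l k = tr Q l k + t * tr D l k.
Proof. apply fst_quad_add_scal. Qed.

Lemma interf_Qstep Q D t k : intf (Qstep Q D t) k = intf Q k + t * intf D k.
Proof.
  unfold interf; rewrite <- sumR_add_scal; apply sumR_ext; intros l _.
  destruct (Nat.eqb l (grp k)); [ring|apply trQhh_Qstep].
Qed.

Lemma total_Qstep Q D t k : total (Qstep Q D t) k = total Q k + t * total D k.
Proof. rewrite <- sumR_add_scal; apply sumR_ext; intros; apply trQhh_Qstep. Qed.

Lemma total_split Q k : (grp k < G)%nat -> total Q k = tr Q (grp k) k + intf Q k.
Proof. intros Hk; exact (sumR_split_at G _ _ Hk). Qed.

Lemma trQhh_nonneg Q l k : Qfeas Q -> (l < G)%nat -> 0 <= tr Q l k.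
Proof. intros [Hpsd _] Hl; apply (Hpsd l Hl). Qed.

Lemma interf_nonneg Q k : Qfeas Q -> 0 <= intf Q k.
Proof.
  intros HQ; apply sumR_nonneg; intros l Hl.
  destruct (Nat.eqb l (grp k)); [lra|apply trQhh_nonneg; assumption].
Qed.

Lemma total_nonneg Q k : Qfeas Q -> 0 <= total Q k.
Proof. intros HQ; apply sumR_nonneg; intros; apply trQhh_nonneg; assumption. Qed.

Lemma rate_log2_sub Q k : Qfeas Q -> (grp k < G)%nat ->
  rate B M G grp h Q k = log2 (1 + total Q k) - log2 (1 + intf Q k).
Proof.
  intros HQ Hk. pose proof (trQhh_nonneg Q (grp k) k HQ Hk). pose proof (interf_nonneg Q k HQ).
  pose proof ln2_pos. rewrite (total_split Q k Hk). unfold rate, log2.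
  replace (1 + tr Q (grp k) k / (intf Q k + 1))
    with ((1 + (tr Q (grp k) k + intf Q k)) / (1 + intf Q k)) by (field; lra).
  rewrite ln_div_pos by lra. field; lra.
Qed.

Lemma rbar_log2_sub Q Qt k :
  rbar B M G grp h Q Qt k = log2 (1 + total Q k) - log2 (1 + intf Qt k)
    - (intf Q k - intf Qt k) / ((1 + intf Qt k) * ln 2).
Proof.
  unfold rbar; do 2 f_equal. unfold interf; rewrite <- sumR_minus.
  apply sumR_ext; intros l _; destruct (Nat.eqb l (grp k)); ring.
Qed.

(* Concavity of [ln]: the linearized interference term overestimates [log2 (1 + intf Q k)]. *)
Lemma rbar_le_rate Q Qt k : Qfeas Q -> Qfeas Qt -> (grp k < G)%nat ->
  rbar B M G grp h Q Qt k <= rate B M G grp h Q k.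
Proof.
  intros HQ HQt Hk. rewrite rbar_log2_sub, rate_log2_sub by assumption.
  pose proof (interf_nonneg Q k HQ); pose proof (interf_nonneg Qt k HQt); pose proof ln2_pos.
  pose proof (ln_sub_le (1 + intf Q k) (1 + intf Qt k) ltac:(lra) ltac:(lra)) as Hln.
  unfold log2.
  replace ((intf Q k - intf Qt k) / ((1 + intf Qt k) * ln 2))
    with (((1 + intf Q k) - (1 + intf Qt k)) / (1 + intf Qt k) / ln 2) by (field; lra).
  apply Rmult_le_compat_r with (r := / ln 2) in Hln; [|left; apply Rinv_0_lt_compat; lra].
  unfold Rdiv in *; lra.
Qed.

Lemma rbar_same Q k : Qfeas Q -> (grp k < G)%nat ->
  rbar B M G grp h Q Q k = rate B M G grp h Q k.
Proof.
  intros HQ Hk. rewrite rbar_log2_sub, rate_log2_sub by assumption.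
  replace (intf Q k - intf Q k) with 0 by ring. unfold Rdiv; ring.
Qed.

Definition gweight (s : nat -> R) (g : nat) : R :=
  lsum s (members K grp g) / (tau g * INR (length (members K grp g))).

(* [Fobj Q s] is [Frates (rate Q) s] by definition. *)
Definition Frates (r s : nat -> R) : R :=
  lmin (fun g => gweight s g * lmin (fun k => r k + / delta * (1 - s k)) (members K grp g))
       (seq 0 G).

Definition Fbar (Q Qt : MatTuple) (s : nat -> R) : R :=
  Frates (rbar B M G grp h Q Qt) s.

Lemma in_members g k : In k (members K grp g) <-> (k < K)%nat /\ grp k = g.
Proof. unfold members. rewrite filter_In, in_seq, Nat.eqb_eq. split; intros; lia. Qed.

Lemma members_nonnil g : (g < G)%nat -> members K grp g <> nil.
Proof using Hnonempty.
  intros Hg Hnil. destruct (Hnonempty g Hg) as [k Hk].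
  apply (in_members g k) in Hk. rewrite Hnil in Hk. destruct Hk.
Qed.

Lemma group_size_pos g : (g < G)%nat -> 0 < tau g * INR (length (members K grp g)).
Proof using Htau Hnonempty.
  intros Hg. apply Rmult_lt_0_compat; [apply Htau; assumption|apply lt_0_INR].
  pose proof (members_nonnil g Hg). destruct (members K grp g); [contradiction|simpl; lia].
Qed.

Lemma gweight_nonneg s g : (forall k, (k < K)%nat -> 0 <= s k <= 1) -> (g < G)%nat ->
  0 <= gweight s g.
Proof using Htau Hnonempty.
  intros Hs Hg. apply Rdiv_nonneg; [|apply group_size_pos; assumption].
  apply lsum_nonneg; intros k Hk; apply in_members in Hk as [Hk _]; apply Hs, Hk.
Qed.

Lemma Frates_le_Frates r1 r2 s : (forall k, (k < K)%nat -> 0 <= s k <= 1) ->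
  (forall k, (k < K)%nat -> r1 k <= r2 k) -> Frates r1 s <= Frates r2 s.
Proof using Htau Hnonempty.
  intros Hs Hr. apply lmin_le_lmin; intros g Hg; apply in_seq in Hg.
  apply Rmult_le_compat_l; [apply gweight_nonneg; [assumption|lia]|].
  apply lmin_le_lmin; intros k Hk; apply in_members in Hk as [Hk _].
  apply Rplus_le_compat_r, Hr, Hk.
Qed.

Lemma Fbar_le_Fobj Q Qt s : Rfeas Q s -> Qfeas Qt ->
  Fbar Q Qt s <= Fobj B M K G grp h tau delta Q s.
Proof using Htau Hnonempty Hgrp.
  intros [HQ Hs] HQt. apply Frates_le_Frates; [assumption|].
  intros k Hk; apply rbar_le_rate; auto.
Qed.

Lemma Fbar_same Q s : Qfeas Q -> Fbar Q Q s = Fobj B M K G grp h tau delta Q s.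
Proof using Hgrp.
  intros HQ. unfold Fbar, Frates. apply lmin_ext; intros g _. f_equal.
  apply lmin_ext; intros k Hk; apply in_members in Hk as [Hk _].
  rewrite rbar_same by (try apply Hgrp; assumption). reflexivity.
Qed.

Lemma subfeas_sq_le_Fbar Qt Q Rg s al : (0 < G)%nat ->
  subfeas B M K G grp serv P h tau delta Qt Q Rg s al -> al * al <= Fbar Q Qt s.
Proof using Htau Hnonempty.
  intros HG (HQ & Hs & Hpsd & Hr). apply lmin_glb.
  { intros Hnil; apply (f_equal (@length nat)) in Hnil.
    rewrite length_seq in Hnil; simpl in Hnil; lia. }
  intros g Hg; apply in_seq in Hg; assert (Hg' : (g < G)%nat) by lia.
  pose proof (gweight_nonneg s g Hs Hg').
  assert (HRg : Rg g <= lmin (fun k => rbar B M G grp h Q Qt k + / delta * (1 - s k))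
                                (members K grp g)).
  { apply lmin_glb; [apply members_nonnil; assumption|].
    intros k Hk; apply Rge_le, Hr; assumption. }
  apply Rle_trans with (gweight s g * Rg g).
  - apply psd2_sq_le; [apply group_size_pos; assumption| |apply Hpsd; assumption].
    apply lsum_nonneg; intros k Hk; apply in_members in Hk as [Hk _]; apply Hs, Hk.
  - apply Rmult_le_compat_l; assumption.
Qed.

Lemma Fbar_le_subopt_sq Qt Q' R' s' al' Q s :
  subopt B M K G grp serv P h tau delta Qt Q' R' s' al' -> Rfeas Q s ->
  Fbar Q Qt s <= al' * al'.
Proof using Htau Hnonempty.
  intros [_ Hopt] [HQ Hs]. set (F := Fbar Q Qt s).
  destruct (Rle_lt_dec F 0) as [HF|HF]; [pose proof (Rle_0_sqr al'); unfold Rsqr in *; lra|].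
  set (Rg g := lmin (fun k => rbar B M G grp h Q Qt k + / delta * (1 - s k)) (members K grp g)).
  enough (Hsub : subfeas B M K G grp serv P h tau delta Qt Q Rg s (sqrt F)).
  { apply Hopt in Hsub. pose proof (sqrt_pos F).
    rewrite <- (sqrt_sqrt F) by lra. apply Rmult_le_compat; assumption. }
  split; [assumption|split; [assumption|split]].
  - intros g Hg. apply psd2_of_sq_le; [apply group_size_pos; assumption| |assumption|].
    + apply lsum_nonneg; intros k Hk; apply in_members in Hk as [Hk _]; apply Hs, Hk.
    + apply (lmin_le (fun g => gweight s g * Rg g)), in_seq; lia.
  - intros g k Hg Hk. apply Rle_ge, (lmin_le (fun k => _ + _)); assumption.
Qed.

Definition tuple_cv (Qn : nat -> MatTuple) (Q : MatTuple) : Prop :=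
  forall g i j, (g < G)%nat -> (i < M * B)%nat -> (j < M * B)%nat ->
    Un_cv (fun n => fst (Qn n g i j)) (fst (Q g i j)) /\
    Un_cv (fun n => snd (Qn n g i j)) (snd (Q g i j)).

Lemma cv_trQhh Qn Q l k : tuple_cv Qn Q -> (l < G)%nat ->
  Un_cv (fun n => tr (Qn n) l k) (tr Q l k).
Proof. intros HQ Hl; apply cv_fst_quad; intros; apply HQ; assumption. Qed.

Lemma cv_interf Qn Q k : tuple_cv Qn Q -> Un_cv (fun n => intf (Qn n) k) (intf Q k).
Proof.
  intros HQ; apply cv_sumR; intros l Hl.
  destruct (Nat.eqb l (grp k)); [apply cv_const|apply cv_trQhh; assumption].
Qed.

Lemma cv_rate Qn Q k : tuple_cv Qn Q -> Qfeas Q -> (grp k < G)%nat ->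
  Un_cv (fun n => rate B M G grp h (Qn n) k) (rate B M G grp h Q k).
Proof.
  intros Hcv HQ Hk. pose proof (trQhh_nonneg Q (grp k) k HQ Hk). pose proof (interf_nonneg Q k HQ).
  apply cv_log2.
  - apply CV_plus; [apply cv_const|].
    apply cv_div; [apply cv_trQhh; assumption| |lra].
    apply CV_plus; [apply cv_interf; assumption|apply cv_const].
  - assert (0 <= tr Q (grp k) k / (intf Q k + 1)) by (apply Rdiv_nonneg; lra). lra.
Qed.

Lemma cv_rbar_linpoint Q Qtn Qt k : tuple_cv Qtn Qt -> Qfeas Qt ->
  Un_cv (fun n => rbar B M G grp h Q (Qtn n) k) (rbar B M G grp h Q Qt k).
Proof.
  intros Hcv HQt. pose proof (interf_nonneg Qt k HQt). pose proof ln2_pos.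
  pose proof (cv_interf Qtn Qt k Hcv) as HI.
  apply cv_ext with (1 := fun n => eq_sym (rbar_log2_sub Q (Qtn n) k)). rewrite rbar_log2_sub.
  apply CV_minus; [apply CV_minus; [apply cv_const|]|].
  - apply cv_log2; [apply CV_plus; [apply cv_const|assumption]|lra].
  - apply cv_div; [apply CV_minus; [apply cv_const|assumption]| |].
    + apply CV_mult; [apply CV_plus; [apply cv_const|assumption]|apply cv_const].
    + apply Rgt_not_eq, Rmult_lt_0_compat; lra.
Qed.

Lemma cv_Frates rn r sn s :
  (forall k, (k < K)%nat -> Un_cv (fun n => rn n k) (r k)) ->
  (forall k, (k < K)%nat -> Un_cv (fun n => sn n k) (s k)) ->
  Un_cv (fun n => Frates (rn n) (sn n)) (Frates r s).
Proof.
  intros Hr Hs. apply cv_lmin; intros g _. unfold gweight, Rdiv.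
  apply CV_mult; [apply CV_mult; [|apply cv_const]|].
  - apply cv_lsum; intros k Hk; apply in_members in Hk as [Hk _]; apply Hs, Hk.
  - apply cv_lmin; intros k Hk; apply in_members in Hk as [Hk _].
    apply CV_plus; [apply Hr, Hk|].
    apply CV_mult; [apply cv_const|apply CV_minus; [apply cv_const|apply Hs, Hk]].
Qed.

Lemma Qfeas_closed Qn Q : (forall n, Qfeas (Qn n)) -> tuple_cv Qn Q -> Qfeas Q.
Proof.
  intros HQn Hcv. split; [|split].
  - intros g Hg; split.
    + intros i j Hi Hj.
      destruct (Hcv g i j Hg Hi Hj) as [Hre Him]; destruct (Hcv g j i Hg Hj Hi) as [Hre' Him'].
      assert (Hherm : forall n, Qn n g i j = Cconj (Qn n g j i))
        by (intros n; destruct (HQn n) as [Hpsd _]; apply (proj1 (Hpsd g Hg)); assumption).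
      destruct (Q g i j) as [a b], (Q g j i) as [c d]; unfold Cconj; simpl in *; f_equal.
      * apply (UL_sequence _ _ _ Hre).
        apply (cv_ext _ _ _ (fun n => f_equal fst (eq_sym (Hherm n))) Hre').
      * apply (UL_sequence _ _ _ Him).
        apply (cv_ext _ _ _ (fun n => f_equal snd (eq_sym (Hherm n))) (CV_opp _ _ Him')).
    + intros v. apply (cv_ge_const _ _ _ (cv_fst_quad _ (fun n => Qn n g) _ v
                                            (fun i j Hi Hj => Hcv g i j Hg Hi Hj))).
      intros n; destruct (HQn n) as [Hpsd _]; apply (proj2 (Hpsd g Hg)).
  - intros b Hb. apply (cv_le_const (fun n => sumR G (fun g => blocktr M (Qn n g) b))).
    + apply cv_sumR; intros g Hg; apply cv_sumR; intros m Hm. apply Hcv; [assumption|nia|nia].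
    + intros n; destruct (HQn n) as [_ [Hpow _]]; apply Hpow; assumption.
  - intros g i j Hg Hi Hj Hoff. destruct (Hcv g i j Hg Hi Hj) as [Hre Him].
    assert (Hzero : forall n, Qn n g i j = C0)
      by (intros n; destruct (HQn n) as [_ [_ Hz]]; apply Hz; assumption).
    destruct (Q g i j) as [a b]; unfold C0; simpl in *; f_equal.
    + apply (cv_eq_const _ _ _ Hre); intros n; rewrite Hzero; reflexivity.
    + apply (cv_eq_const _ _ _ Him); intros n; rewrite Hzero; reflexivity.
Qed.

Lemma gweight_sstep s ds t g : gweight (sstep s ds t) g = gweight s g + t * gweight ds g.
Proof. unfold gweight; rewrite lsum_sstep; unfold Rdiv; ring. Qed.

Lemma right_deriv0_gweight s ds g :
  right_deriv0 (fun t => gweight (sstep s ds t) g) (gweight s g) (gweight ds g).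
Proof.
  apply right_deriv0_ext with (fun t => gweight s g + t * gweight ds g).
  - apply near0_forall; intros t; apply gweight_sstep.
  - apply right_deriv0_affine.
Qed.

Lemma right_deriv0_penalty s ds k :
  right_deriv0 (fun t => / delta * (1 - sstep s ds t k)) (/ delta * (1 - s k)) (- / delta * ds k).
Proof.
  apply right_deriv0_ext with (fun t => / delta * (1 - s k) + t * (- / delta * ds k)).
  - apply near0_forall; intros t; unfold sstep; ring.
  - apply right_deriv0_affine.
Qed.

Lemma Frates_right_deriv0 (r : R -> nat -> R) r0 s ds :
  (forall k, (k < K)%nat -> exists a, right_deriv0 (fun t => r t k) (r0 k) a) ->
  exists L, right_deriv0 (fun t => Frates (r t) (sstep s ds t)) (Frates r0 s) L.
Proof.
  intros Hr. apply right_deriv0_lmin; intros g _.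
  destruct (right_deriv0_lmin (fun t k => r t k + / delta * (1 - sstep s ds t k))
              (fun k => r0 k + / delta * (1 - s k)) (members K grp g)) as [b Hb].
  { intros k Hk; apply in_members in Hk. destruct (Hr k (proj1 Hk)) as [a Ha].
    eexists; exact (right_deriv0_plus _ _ _ _ _ _ Ha (right_deriv0_penalty s ds k)). }
  eexists; exact (right_deriv0_mul _ _ _ _ _ _ (right_deriv0_gweight s ds g) Hb).
Qed.

Lemma Frates_tangent (r1 r2 : R -> nat -> R) s ds :
  (forall k, (k < K)%nat -> tangent0 (fun t => r1 t k) (fun t => r2 t k)) ->
  tangent0 (fun t => Frates (r1 t) (sstep s ds t)) (fun t => Frates (r2 t) (sstep s ds t)).
Proof.
  intros Hr. apply tangent0_lmin; intros g _.
  apply (tangent0_mul_l _ _ _ _ _ (right_deriv0_gweight s ds g)).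
  apply tangent0_lmin; intros k Hk; apply in_members in Hk.
  apply (tangent0_of_diff _ _ _ _ (Hr k (proj1 Hk))). apply near0_forall; intros t; ring.
Qed.

Lemma rbar_Qstep_right_deriv0 Q D k : Qfeas Q ->
  exists a, right_deriv0 (fun t => rbar B M G grp h (Qstep Q D t) Q k)
                         (rbar B M G grp h Q Q k) a.
Proof.
  intros HQ. pose proof (total_nonneg Q k HQ). pose proof (interf_nonneg Q k HQ).
  pose proof ln2_pos.
  replace (rbar B M G grp h Q Q k) with (log2 (1 + total Q k) + - log2 (1 + intf Q k))
    by (rewrite rbar_log2_sub; field; lra).
  eexists. apply right_deriv0_ext with (fun t => log2 (1 + total Q k + t * total D k)
             + (- log2 (1 + intf Q k) + t * - (intf D k / ((1 + intf Q k) * ln 2)))).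
  - apply near0_forall; intros t. rewrite rbar_log2_sub, total_Qstep, interf_Qstep.
    replace (1 + (total Q k + t * total D k)) with (1 + total Q k + t * total D k) by ring.
    field; lra.
  - apply right_deriv0_plus; [apply right_deriv0_log2_affine; lra|apply right_deriv0_affine].
Qed.

(* [rate] and [rbar (. | Q)] differ by [log2 (1 + intf)] minus its tangent at [Q]. *)
Lemma rate_tangent_rbar Q D k : Qfeas Q -> (grp k < G)%nat ->
  near0 (fun t => Qfeas (Qstep Q D t)) ->
  tangent0 (fun t => rate B M G grp h (Qstep Q D t) k)
           (fun t => rbar B M G grp h (Qstep Q D t) Q k).
Proof.
  intros HQ Hk Hfeas. pose proof (interf_nonneg Q k HQ). pose proof ln2_pos.
  apply (tangent0_of_diff (fun t => log2 (1 + intf Q k) + t * (intf D k / (1 + intf Q k) / ln 2))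
                          (fun t => log2 (1 + intf Q k + t * intf D k))).
  - apply (tangent0_of_right_deriv0 _ _ _ _ (right_deriv0_affine _ _)).
    apply right_deriv0_log2_affine; lra.
  - generalize Hfeas; apply near0_mono; intros t Ht HQt.
    rewrite rate_log2_sub, rbar_log2_sub, interf_Qstep by assumption.
    replace (1 + (intf Q k + t * intf D k)) with (1 + intf Q k + t * intf D k) by ring.
    field; lra.
Qed.

Lemma stationaryR_of_Fbar_max Q s : Rfeas Q s ->
  (forall Q' s', Rfeas Q' s' -> Fbar Q' Q s' <= Fobj B M K G grp h tau delta Q s) ->
  stationaryR B M K G grp serv P h tau delta Q s.
Proof using Hgrp.
  intros HR Hmax. split; [assumption|]. intros D ds [t0 [Ht0 Hdir]].
  assert (Hnear : near0 (fun t => Rfeas (Qstep Q D t) (sstep s ds t)))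
    by (exists t0; split; [assumption|intros t Ht; apply Hdir; lra]).
  destruct (Frates_right_deriv0 (fun t => rbar B M G grp h (Qstep Q D t) Q) _ s ds
              (fun k _ => rbar_Qstep_right_deriv0 Q D k (proj1 HR))) as [L HL].
  fold (Fbar Q Q s) in HL; rewrite Fbar_same in HL by apply HR.
  exists L; split.
  - apply (right_deriv0_nonpos _ _ _ HL).
    generalize Hnear; apply near0_mono; intros t _ Ht; apply Hmax; assumption.
  - apply right_deriv0_quotient, (right_deriv0_tangent _ _ _ _ HL).
    apply Frates_tangent; intros k Hk; apply rate_tangent_rbar; [apply HR|auto|].
    generalize Hnear; apply near0_mono; intros t _ Ht; apply Ht.
Qed.

Lemma Fbar_le_Fobj_next Qt Q' R' s' al' Q s : (0 < G)%nat -> Qfeas Qt ->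
  subopt B M K G grp serv P h tau delta Qt Q' R' s' al' -> Rfeas Q s ->
  Fbar Q Qt s <= Fobj B M K G grp h tau delta Q' s'.
Proof using Htau Hgrp Hnonempty.
  intros HG HQt Hopt HR. apply Rle_trans with (al' * al').
  { exact (Fbar_le_subopt_sq _ _ _ _ _ _ _ Hopt HR). }
  destruct Hopt as [Hsub _]. eapply Rle_trans; [apply (subfeas_sq_le_Fbar _ _ _ _ _ HG Hsub)|].
  destruct Hsub as (HQ' & Hs' & _). apply Fbar_le_Fobj; [split|]; assumption.
Qed.

End Problem.

Theorem proposition1
  (B M K G : nat) (grp : nat -> nat) (serv : nat -> nat -> bool)
  (P : nat -> R) (h : nat -> nat -> Cpx) (tau : nat -> R) (delta : R)
  (Hdelta : 0 < delta)
  (HP : forall b, (b < B)%nat -> 0 <= P b)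
  (Htau : forall g, (g < G)%nat -> 0 < tau g)
  (HG : (0 < G)%nat)
  (Hgrp : forall k, (k < K)%nat -> (grp k < G)%nat)
  (Hnonempty : forall g, (g < G)%nat -> exists k, (k < K)%nat /\ grp k = g)
  (Hserv : forall g b, serv g b = true -> (b < B)%nat)
  (Qs : nat -> MatTuple) (Rs : nat -> nat -> R) (ss : nat -> nat -> R)
  (als : nat -> R)
  (Hinit : Qfeas B M G serv P (Qs O))
  (Hiter : forall n, subopt B M K G grp serv P h tau delta
                        (Qs n) (Qs (S n)) (Rs (S n)) (ss (S n)) (als (S n)))
  (phi : nat -> nat) (Hphi : forall n, (phi n < phi (S n))%nat)
  (Qstar : MatTuple) (sstar : nat -> R) (Rstar : nat -> R) (alstar : R)
  (HQre : forall g i j, (g < G)%nat -> (i < M * B)%nat -> (j < M * B)%nat ->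
     Un_cv (fun n => fst (Qs (phi n) g i j)) (fst (Qstar g i j)))
  (HQim : forall g i j, (g < G)%nat -> (i < M * B)%nat -> (j < M * B)%nat ->
     Un_cv (fun n => snd (Qs (phi n) g i j)) (snd (Qstar g i j)))
  (Hs : forall k, (k < K)%nat -> Un_cv (fun n => ss (phi n) k) (sstar k))
  (HR : forall g, (g < G)%nat -> Un_cv (fun n => Rs (phi n) g) (Rstar g))
  (Hal : Un_cv (fun n => als (phi n)) alstar) :
  stationaryR B M K G grp serv P h tau delta Qstar sstar.
Proof.
  assert (HRn : forall n, Rfeas B M K G serv P (Qs (S n)) (ss (S n)))
    by (intros n; destruct (Hiter n) as [(HQ & Hsn & _) _]; split; assumption).
  assert (HQn : forall n, Qfeas B M G serv P (Qs n)) by (intros [|n]; [assumption|apply HRn]).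
  assert (Hcv : tuple_cv B M G (fun n => Qs (phi n)) Qstar)
    by (intros g i j Hg Hi Hj; split; auto).
  assert (HQstar : Qfeas B M G serv P Qstar)
    by (apply (Qfeas_closed B M G serv P (fun n => Qs (phi n))); auto).
  assert (Hsstar : forall k, (k < K)%nat -> 0 <= sstar k <= 1).
  { intros k Hk. assert (Hbnd : forall n, (1 <= n)%nat -> 0 <= ss n k <= 1)
      by (intros [|n] Hn; [lia|apply (proj2 (HRn n)); assumption]).
    split; [apply (cv_subseq_ge (fun n => ss n k) phi _ _ 1)
           |apply (cv_subseq_le (fun n => ss n k) phi _ _ 1)]; auto; apply Hbnd. }
  set (F n := Fobj B M K G grp h tau delta (Qs n) (ss n)).
  assert (Hnext : forall n Q s, Rfeas B M K G serv P Q s ->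
                    Fbar B M K G grp h tau delta Q (Qs n) s <= F (S n))
    by (intros n Q s HRQ; eapply Fbar_le_Fobj_next; eauto).
  assert (HFlim : forall n, F (S n) <= Fobj B M K G grp h tau delta Qstar sstar).
  { intros n; apply (cv_subseq_ge F phi _ _ (S n) Hphi).
    - apply cv_Frates; [intros k Hk; apply cv_rate with (serv := serv) (P := P); auto|assumption].
    - intros m Hm; induction Hm as [|m Hm IH]; [lra|destruct m as [|m]; [lia|]].
      eapply Rle_trans; [exact IH|]. unfold F at 1.
      rewrite <- Fbar_same with (serv := serv) (P := P) by (assumption || apply HQn).
      apply Hnext, HRn. }
  apply (stationaryR_of_Fbar_max B M K G grp serv P h tau delta Hgrp); [split; assumption|].
  intros Q s HRQ.
  apply cv_le_const with (u := fun n => Fbar B M K G grp h tau delta Q (Qs (phi n)) s).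
  - apply cv_Frates; intros k Hk; [|apply cv_const].
    apply cv_rbar_linpoint with (serv := serv) (P := P); assumption.
  - intros n; eapply Rle_trans; [apply Hnext, HRQ|apply HFlim].
Qed.
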